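(* Let $H'\subseteq E\setminus H$. Then every pair $(s_i,t_i)$, $i\in[k]$, is $(p,q+1)$-flex-connected in $H\cup H'$ if and only if, for every violating edge set $F$, $H'$ is a feasible augmentation for $F$.
   Context: Let $G=(V,E)$ be an undirected graph whose edge set is partitioned into safe edges $\mathcal{S}$ and unsafe edges $\mathcal{U}$, and let $(s_i,t_i)$, $i\in[k]$, be terminal pairs. Vertices $s,t$ are $(p,q)$-flex-connected in an edge set $H$ if every cut $\delta_H(S)$ with $|S\cap\{s,t\}|=1$ contains at least $p$ safe edges or at least $p+q$ edges in total. Let $H\subseteq E$ be such that every pair $(s_i,t_i)$ is $(p,q)$-flex-connected in $H$. A violating edge set is a set $F=\delta_H(S)$ for some $S\subseteq V$ with $|S\cap\{s_i,t_i\}|=1$ for some $i$, such that $|\delta_H(S)|=p+q$ and at most $p-1$ edges of $\delta_H(S)$ are safe. A set $H'\subseteq E\setminus H$ is a feasible augmentation for a violating edge set $F$ if for each $i\in[k]$ there is a path from $s_i$ to $t_i$ in the graph with edge set $(H\cup H')\setminus F$. *)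

From mathcomp Require Import all_boot.
Set Implicit Arguments. Unset Strict Implicit. Unset Printing Implicit Defensive.

(* An undirected multigraph G = (V,E): each edge e : E has endpoints
   end1 e and end2 e.  The edge set E is the whole finite type E. *)
Section Flex.
Variables (V E : finType) (end1 end2 : E -> V).

Definition cut (H : {set E}) (S : {set V}) : {set E} :=
  [set e in H | (end1 e \in S) != (end2 e \in S)].

Definition separates (S : {set V}) (s t : V) : bool := (s \in S) != (t \in S).

(* s,t are (p,q)-flex-connected in H (safe = set of safe edges;
   unsafe edges are its complement) *)
Definition flex_connected (safe : {set E}) (p q : nat) (H : {set E}) (s t : V) :=
  forall S : {set V}, separates S s t ->
    p <= #|cut H S :&: safe| \/ p + q <= #|cut H S|.

Definition adj (X : {set E}) : rel V :=
  fun x y => [exists e in X, ((end1 e == x) && (end2 e == y)) ||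
                             ((end1 e == y) && (end2 e == x))].

Definition has_path (X : {set E}) (s t : V) : bool := connect (adj X) s t.

Definition violating (safe : {set E}) (p q k : nat) (s t : 'I_k -> V)
    (H F : {set E}) :=
  exists S : {set V}, (exists i : 'I_k, separates S (s i) (t i)) /\
    F = cut H S /\ #|cut H S| = p + q /\ #|cut H S :&: safe| < p.

Definition feasible_aug (k : nat) (s t : 'I_k -> V) (H H' F : {set E}) :=
  forall i : 'I_k, has_path ((H :|: H') :\: F) (s i) (t i).
End Flex.

From mathcomp Require Import all_boot.

Set Implicit Arguments.
Unset Strict Implicit.
Unset Printing Implicit Defensive.

(* A violating set F = delta_H(S) has p + q edges, fewer than p of them safe,
   so it is not a (p, q+1)-flex cut.  If every pair is (p, q+1)-flex-connected
   in H u H', removing F therefore cannot separate s_i from t_i: the component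
   of s_i in (H u H') \ F has its whole boundary inside F.  Conversely, as H is
   (p, q)-flex-connected, the only cuts failing the (p, q+1) condition in H u H'
   are violating ones, and a path of (H u H') \ delta_H(S) joining the two sides
   of S crosses S through an edge of H', so delta_{H u H'}(S) gets p + q + 1
   edges. *)

Section FlexCuts.

Variables (V E : finType) (end1 end2 : E -> V).

Local Notation cut := (cut end1 end2).
Local Notation adj := (adj end1 end2).

Lemma adj_sym (X : {set E}) : symmetric (adj X).
Proof.
by move=> x y; apply/existsP/existsP => -[e /andP[Xe xy]];
  exists e; rewrite Xe orbC.
Qed.

Lemma cutS (S : {set V}) (X Y : {set E}) : X \subset Y -> cut X S \subset cut Y S.
Proof.
by move=> sXY; apply/subsetP => e; rewrite !inE => /andP[/(subsetP sXY) -> ->].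
Qed.

Lemma cutD (X Y : {set E}) (S : {set V}) : cut (X :\: Y) S = cut X S :\: Y.
Proof. by apply/setP => e; rewrite !inE andbA. Qed.

Lemma cut_eq0P (X : {set E}) (S : {set V}) :
  reflect (closed (adj X) S) (cut X S == set0).
Proof.
apply: (iffP eqP) => [cut0 x y /existsP[e /andP[Xe /orP[]]] | clS].
- by case/andP=> /eqP<- /eqP<-; apply/eqP;
    have := in_set0 e; rewrite -cut0 inE Xe => /negbFE.
- by case/andP=> /eqP<- /eqP<-; apply/eqP;
    have := in_set0 e; rewrite -cut0 inE Xe eq_sym => /negbFE.
apply/setP => e; rewrite !inE; apply/negbTE/nandP.
case Xe: (e \in X); [right | by left].
by rewrite negbK; apply/eqP/clS/existsP; exists e; rewrite Xe !eqxx.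
Qed.

Lemma connect_cut_neq0 (X : {set E}) (S : {set V}) x y :
  connect (adj X) x y -> separates S x y -> cut X S != set0.
Proof.
move=> xy; apply: contraL => /cut_eq0P/closed_connect/(_ _ _ xy) xSyS.
by rewrite /separates xSyS eqxx.
Qed.

Lemma cut_component (X : {set E}) x : cut X [set y | connect (adj X) x y] = set0.
Proof.
apply/eqP/cut_eq0P => y z yz; rewrite !inE.
exact: connect_closed (sym_connect_sym (adj_sym X)) _ _ _ yz.
Qed.

Lemma cut_component_sub (Y F : {set E}) x :
  cut Y [set y | connect (adj (Y :\: F)) x y] \subset F.
Proof. by rewrite -setD_eq0 -cutD cut_component. Qed.

Variables (safe : {set E}) (p q : nat).

Local Notation has_path := (has_path end1 end2).
Local Notation flex_connected := (flex_connected end1 end2 safe).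

Lemma flex_connected_path_avoiding (Y F : {set E}) s t :
  flex_connected p q.+1 Y s t -> #|F :&: safe| < p -> #|F| <= p + q ->
  has_path (Y :\: F) s t.
Proof.
move=> flexY few_safe small_F; apply/negPn/negP => no_path.
set T := [set y | connect (adj (Y :\: F)) s y].
have sepT : separates T s t by rewrite /separates !inE connect0.
have cutT_F := cut_component_sub Y F s.
case: (flexY T sepT) => [many_safe | many].
- by have := leq_trans many_safe (subset_leq_card (setSI safe cutT_F));
    rewrite leqNgt few_safe.
- by have := leq_trans many (leq_trans (subset_leq_card cutT_F) small_F);
    rewrite addnS ltnn.
Qed.

Lemma flex_connected_raise (H Y : {set E}) s t :
  H \subset Y -> flex_connected p q H s t ->
  (forall S, separates S s t -> #|cut H S| = p + q -> #|cut H S :&: safe| < p ->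
     has_path (Y :\: cut H S) s t) ->
  flex_connected p q.+1 Y s t.
Proof.
move=> sHY flexH avoid S sepS.
have sub_cut := cutS S sHY.
have [enough_safe | few_safe] := leqP p #|cut H S :&: safe|.
  by left; apply: leq_trans enough_safe (subset_leq_card (setSI safe sub_cut)).
have big_cut : p + q <= #|cut H S|.
  by case: (flexH S sepS) => //; rewrite leqNgt few_safe.
right; have [tight | loose] := eqVneq #|cut H S| (p + q).
- have crossing := connect_cut_neq0 (avoid S sepS tight few_safe) sepS.
  rewrite cutD setD_eq0 in crossing.
  by rewrite addnS -tight; apply: proper_card; rewrite properE sub_cut.
- rewrite addnS; apply: leq_trans (subset_leq_card sub_cut).
  by rewrite ltn_neqAle eq_sym loose big_cut.
Qed.

End FlexCuts.

Theorem claim4p1 (V E : finType) (end1 end2 : E -> V) (safe : {set E})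
    (p q k : nat) (s t : 'I_k -> V) (H H' : {set E}) :
  (forall i : 'I_k, flex_connected end1 end2 safe p q H (s i) (t i)) ->
  [disjoint H' & H] ->
  (forall i : 'I_k, flex_connected end1 end2 safe p q.+1 (H :|: H') (s i) (t i))
  <->
  (forall F : {set E}, violating end1 end2 safe p q s t H F ->
     feasible_aug end1 end2 s t H H' F).
Proof.
move=> flexH _; split.
- move=> flexHH' F [S [_ [-> [tight few_safe]]]] i.
  by apply: flex_connected_path_avoiding (flexHH' i) few_safe _; rewrite tight.
- move=> aug i; apply: flex_connected_raise (subsetUl H H') (flexH i) _.
  move=> S sepS tight few_safe; apply: (aug (cut end1 end2 H S) _ i).
  by exists S; split; [exists i | split].
Qed.
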